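(* For an integer $k\ge 2$ let $m_k=2^{2^k-1}F_1F_2\cdots F_{k-1}$, where $F_j=2^{2^j}+1$ is the $j$-th Fermat number. Then $m_k$ is imperfect, i.e. $2\beta(m_k)=m_k$, if and only if $k\in\{2,3,4,5\}$.
   Context: $\beta$ is the multiplicative arithmetic function with $\beta(1)=1$ and $\beta(p^a)=p^a-p^{a-1}+\cdots+(-1)^a=\frac{p^{a+1}+(-1)^a}{p+1}$ for every prime power $p^a$ ($a\ge1$). A positive integer $n$ is called imperfect if $2\beta(n)=n$. *)

From mathcomp Require Import all_boot all_order all_algebra.
Set Implicit Arguments. Unset Strict Implicit. Unset Printing Implicit Defensive.
Import GRing.Theory Num.Theory.

Definition beta_pp (p a : nat) : int :=
  (\sum_(i < a.+1) (-1) ^+ (a - i) * (Posz p) ^+ i)%R.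

(* beta is multiplicative with beta(1) = 1: product over the prime factorization. *)
Definition beta (n : nat) : int :=
  (\prod_(p <- primes n) beta_pp p (logn p n))%R.

Definition imperfect (n : nat) : Prop := (0 < n)%N /\ (2 * beta n)%R = Posz n.

Definition fermat (j : nat) : nat := 2 ^ (2 ^ j) + 1.

Definition m_k (k : nat) : nat := 2 ^ (2 ^ k - 1) * \prod_(1 <= j < k) fermat j.

(* Write P_k = F_1 ... F_(k-1), so that m_k = 2^(2^k - 1) * P_k.  The proof
   rests on three facts about beta:
   - on prime powers, (p + 1) beta(p^a) = p^(a+1) + (-1)^a;
   - beta is multiplicative, and beta(p^(v_p n)) is a factor of beta(n);
   - since F_0 F_1 ... F_(k-1) = 2^(2^k) - 1 = 3 P_k, the closed form gives
     beta(2^(2^k - 1)) = P_k, hence beta(m_k) = P_k beta(P_k).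
   Consequently m_k is imperfect iff beta(P_k) = 2^(2^k - 2).
   - If F_1, ..., F_(k-1) are all prime (k <= 5), then
     beta(P_k) = prod (F_j - 1) = prod 2^(2^j) = 2^(2^k - 2).
   - If k >= 6, then 641 divides F_5 and hence P_k, so beta(P_k) has the factor
     beta(641^b) with b > 0, which is not a power of 2 (a congruence argument
     modulo 4 and 5 on the closed form); so beta(P_k) is not a power of 2. *)

From mathcomp Require Import all_boot all_order all_algebra.
From mathcomp Require Import zify ring.
Import GRing.Theory Num.Theory.

Lemma PoszX a b : Posz (a ^ b) = (Posz a ^+ b)%R.
Proof. by rewrite -[LHS]natz natrX natz. Qed.

Lemma beta_pp0 p : beta_pp p 0 = 1%R.
Proof. by rewrite /beta_pp big_ord1 expr0 mulr1. Qed.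

Lemma beta_ppS p a : beta_pp p a.+1 = (Posz p ^+ a.+1 - beta_pp p a)%R.
Proof.
rewrite /beta_pp big_ord_recr /= subnn expr0 mul1r addrC; congr (_ + _)%R.
rewrite -sumrN; apply: eq_bigr => i _ /=.
by rewrite subSn ?exprS ?mulN1r ?mulNr // -ltnS ltn_ord.
Qed.

Lemma beta_pp1 p : beta_pp p 1 = (Posz p - 1)%R.
Proof. by rewrite beta_ppS beta_pp0 expr1. Qed.

Lemma beta_pp_closed p a :
  ((Posz p + 1) * beta_pp p a = Posz p ^+ a.+1 + (-1) ^+ a)%R.
Proof.
elim: a => [|a IH]; first by rewrite beta_pp0 expr1 expr0 mulr1.
rewrite beta_ppS mulrBr IH !exprS.
set x := Posz p; set s := ((-1) ^+ a)%R; set y := (x ^+ a)%R; ring.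
Qed.

Lemma beta_prod_primes_below {n N} : (n < N)%N ->
  beta n = (\prod_(0 <= p < N | prime p) beta_pp p (logn p n))%R.
Proof.
move=> ltnN; rewrite /beta.
have -> : (\prod_(0 <= p < N | prime p) beta_pp p (logn p n) =
           \prod_(p <- index_iota 0 N | p \in primes n) beta_pp p (logn p n))%R.
  rewrite [RHS]big_mkcond [LHS]big_mkcond; apply: eq_bigr => p _.
  case pp: (prime p); case pn: (p \in primes n) => //.
    by move: pn; rewrite -logn_gt0 lt0n => /negbFE/eqP ->; rewrite beta_pp0.
  by move: pn; rewrite mem_primes pp.
rewrite -[in RHS]big_filter; apply: perm_big; apply: uniq_perm.
- exact: primes_uniq.
- by rewrite filter_uniq // iota_uniq.
move=> p; rewrite mem_filter mem_index_iota /=.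
case pn: (p \in primes n) => //=; move: pn; rewrite mem_primes.
by case/and3P=> _ n0 pd; rewrite (leq_ltn_trans (dvdn_leq n0 pd)).
Qed.

Lemma beta_coprimeM m n : coprime m n -> (0 < m)%N -> (0 < n)%N ->
  beta (m * n) = (beta m * beta n)%R.
Proof.
move=> cmn m0 n0.
have ltm : (m < (m * n).+1)%N by rewrite ltnS leq_pmulr.
have ltn : (n < (m * n).+1)%N by rewrite ltnS leq_pmull.
rewrite (beta_prod_primes_below (ltnSn (m * n))) (beta_prod_primes_below ltm).
rewrite (beta_prod_primes_below ltn) -big_split /=.
apply: eq_bigr => p pp; rewrite lognM //.
case pm: (p %| m).
  have -> : logn p n = 0%N.
    rewrite lognE; case pn: (p %| n); last by rewrite !andbF.
    have : p %| gcdn m n by rewrite dvdn_gcd pm pn.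
    by rewrite (eqP cmn) dvdn1 => /eqP p1; rewrite p1 in pp.
  by rewrite addn0 beta_pp0 mulr1.
have -> : logn p m = 0%N by rewrite lognE pm !andbF.
by rewrite add0n beta_pp0 mul1r.
Qed.

Lemma beta_prime_power p a : prime p -> beta (p ^ a) = beta_pp p a.
Proof.
move=> pp; case: a => [|a]; first by rewrite expn0 /beta big_nil beta_pp0.
by rewrite /beta primesX // primes_prime // big_seq1 pfactorK.
Qed.

Lemma beta1 : beta 1 = 1%R.
Proof. by rewrite /beta big_nil. Qed.

Lemma beta_pp_dvd_beta {p n} : p \in primes n ->
  (`|beta_pp p (logn p n)| %| `|beta n|)%N.
Proof.
move=> pn; rewrite /beta (bigD1_seq _ pn (primes_uniq n)) /= abszM.
exact: dvdn_mulr.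
Qed.

Definition fermat_prod0 k := \prod_(0 <= j < k) fermat j.
Definition fermat_prod1 k := \prod_(1 <= j < k) fermat j.

Lemma m_kE k : m_k k = (2 ^ (2 ^ k - 1) * fermat_prod1 k)%N.
Proof. by []. Qed.

Lemma fermat_prod0S k : (fermat_prod0 k + 1 = 2 ^ (2 ^ k))%N.
Proof.
elim: k => [|k IH]; first by rewrite /fermat_prod0 big_geq.
rewrite /fermat_prod0 big_nat_recr //= -/(fermat_prod0 k) /fermat expnS.
rewrite [2 * _]mulnC expnM -IH; set q := fermat_prod0 k; nia.
Qed.

Lemma fermat_prod0_split k : (0 < k)%N -> fermat_prod0 k = (3 * fermat_prod1 k)%N.
Proof. by move=> k0; rewrite /fermat_prod0 big_ltn. Qed.

Lemma fermat_prod0_odd k : odd (fermat_prod0 k).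
Proof.
have ev : ~~ odd (2 ^ 2 ^ k) by rewrite oddX expn_eq0.
by move: ev; rewrite -fermat_prod0S addn1 /= negbK.
Qed.

Lemma fermat_prod1_odd k : odd (fermat_prod1 k).
Proof.
case: k => [|k]; first by rewrite /fermat_prod1 big_geq.
by have := fermat_prod0_odd k.+1; rewrite fermat_prod0_split // oddM.
Qed.

Lemma fermat_prod1_gt0 k : (0 < fermat_prod1 k)%N.
Proof. by rewrite odd_gt0 ?fermat_prod1_odd. Qed.

(* Fermat numbers are pairwise coprime: F_k = F_0 ... F_(k-1) + 2 is odd. *)
Lemma coprime_fermat_prod1 k : coprime (fermat_prod1 k) (fermat k).
Proof.
case: k => [|k]; first by rewrite /fermat_prod1 big_geq // coprime1n.
apply: (@coprime_dvdl _ (fermat_prod0 k.+1)).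
  by rewrite fermat_prod0_split // dvdn_mull.
have -> : fermat k.+1 = (fermat_prod0 k.+1 + 2)%N.
  by rewrite /fermat -fermat_prod0S -addnA.
rewrite /coprime gcdnDl gcdnC -gcdn_modr modn2 fermat_prod0_odd.
by rewrite gcdn1.
Qed.

(* The closed form gives 3 beta(2^(2^k - 1)) = 2^(2^k) - 1 = 3 P_k, since
   2^k - 1 is odd. *)
Lemma beta_pow2_part k : (0 < k)%N ->
  beta (2 ^ (2 ^ k - 1)) = Posz (fermat_prod1 k).
Proof.
move=> k0; rewrite beta_prime_power //.
have closed := beta_pp_closed 2 (2 ^ k - 1).
have k1 : (1 <= 2 ^ k)%N by rewrite expn_gt0.
rewrite -signr_odd oddB // oddX (negbTE (lt0n_neq0 k0)) /= in closed.
rewrite subnSK // subn0 -PoszX -fermat_prod0S fermat_prod0_split // in closed.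
by move: closed; rewrite expr1 PoszD PoszM; lia.
Qed.

Lemma beta_m_k k : (0 < k)%N ->
  beta (m_k k) = (Posz (fermat_prod1 k) * beta (fermat_prod1 k))%R.
Proof.
move=> k0; rewrite m_kE beta_coprimeM ?beta_pow2_part ?expn_gt0 ?fermat_prod1_gt0 //.
by apply: coprimeXl; rewrite coprime2n fermat_prod1_odd.
Qed.

Lemma imperfect_m_kE k : (0 < k)%N ->
  imperfect (m_k k) <-> beta (fermat_prod1 k) = Posz (2 ^ (2 ^ k - 2)).
Proof.
move=> k0; rewrite /imperfect beta_m_k // m_kE muln_gt0 expn_gt0 fermat_prod1_gt0.
have two_pow : (2 ^ (2 ^ k - 1) = 2 * 2 ^ (2 ^ k - 2))%N.
  have k2 : (2 <= 2 ^ k)%N by rewrite (leq_exp2l 1).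
  by rewrite -expnS; congr (2 ^ _)%N; lia.
have P0 : (2 * Posz (fermat_prod1 k) != 0)%R.
  by rewrite -PoszM -lt0n muln_gt0 fermat_prod1_gt0.
rewrite two_pow -mulnA [(_ * fermat_prod1 k)%N]mulnC !PoszM.
split=> [[_ eq2] | ->] //; apply: (mulfI P0); by rewrite -!mulrA.
Qed.

Lemma fermat_prime_small j : (j < 5)%N -> prime (fermat j).
Proof. by case: j => [|[|[|[|[|j]]]]]. Qed.

(* If F_1, ..., F_(k-1) are prime, then by multiplicativity and
   beta(F_j) = F_j - 1 = 2^(2^j) we get beta(P_k) = 2^(2 + 4 + ... + 2^(k-1)). *)
Lemma beta_fermat_prod1_prime k : (forall j, (0 < j < k)%N -> prime (fermat j)) ->
  beta (fermat_prod1 k) = Posz (2 ^ (2 ^ k - 2)).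
Proof.
elim: k => [|[|k] IH] fermat_pr; try by rewrite /fermat_prod1 big_geq // beta1.
rewrite /fermat_prod1 big_nat_recr //= -/(fermat_prod1 k.+1).
have fermat_gt0 : (0 < fermat k.+1)%N by rewrite /fermat addn1.
rewrite beta_coprimeM ?fermat_prod1_gt0 ?coprime_fermat_prod1 //.
rewrite IH => [|j /andP [j0 jk]]; last by apply: fermat_pr; rewrite j0 ltnW.
have pr_k1 : prime (fermat k.+1) by apply: fermat_pr; rewrite ltnSn.
rewrite -(expn1 (fermat k.+1)) beta_prime_power //.
rewrite beta_pp1 /fermat PoszD addrK -PoszM -expnD; congr (Posz (2 ^ _)).
have k2 : (2 <= 2 ^ k.+1)%N by rewrite (leq_exp2l 1).
by rewrite (expnS 2 k.+1); lia.
Qed.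

Lemma dvd641_fermat5 : (641 %| fermat 5)%N.
Proof.
have pow16 : (2 ^ 16 %% 641 = 154)%N by vm_compute.
have pow5 : (2 ^ 5 = 16 * 2)%N by [].
rewrite /fermat pow5 expnM; move: pow16; move: (2 ^ 16)%N => x pow16.
by rewrite /dvdn -modnDml -modnXm pow16.
Qed.

Lemma dvd641_fermat_prod1 k : (6 <= k)%N -> (641 %| fermat_prod1 k)%N.
Proof.
move=> k6; rewrite /fermat_prod1 (big_cat_nat (n := 6)) // (big_nat_recr 5) //=.
by apply: dvdn_mulr; apply: dvdn_mull; apply: dvd641_fermat5.
Qed.

(* beta(641^b) is not a power of 2 when b > 0.  By the closed form,
   642 beta(641^b) = 641^(b+1) + (-1)^b.  For b odd the right side is divisible
   by 5 and the left side is not; for b even the right side is 2 mod 4, which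
   forces |beta(641^b)| = 1, too small for 641^(b+1) + 1 >= 641^3. *)
Lemma beta_pp641_ndvd_pow2 b N : (0 < b)%N -> ~~ (`|beta_pp 641 b| %| 2 ^ N)%N.
Proof.
move=> b0; apply/negP => /(dvdn_pfactor _ _ (isT : prime 2)) [t _ beta_pow2].
have closed := beta_pp_closed 641 b.
rewrite -signr_odd -PoszX in closed.
have X_ge : (641 ^ 2 <= 641 ^ b.+1)%N by rewrite leq_exp2l // ltnS.
have X_mod4 : (641 ^ b.+1 %% 4 = 1)%N by rewrite -modnXm exp1n.
have X_mod5 : (641 ^ b.+1 %% 5 = 1)%N by rewrite -modnXm exp1n.
have T_mod5 : (2 ^ t %% 5 != 0)%N.
  by apply/negP => T5; have : (5 %| 2 ^ t)%N := T5; rewrite Euclid_dvdX.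
have T_even : (2 ^ t = 1 \/ 2 ^ t %% 2 = 0)%N.
  by case: (t) => [|t1]; [left | right; rewrite expnS modnMr].
move: X_ge X_mod4 X_mod5 T_mod5 T_even closed beta_pow2.
set X := (641 ^ b.+1)%N; set T := (2 ^ t)%N.
by case: (odd b) => /= *; lia.
Qed.

Lemma beta_fermat_prod1_not_pow2 k N : (6 <= k)%N ->
  beta (fermat_prod1 k) <> Posz (2 ^ N).
Proof.
move=> k6 beta_pow2.
have p641 : 641 \in primes (fermat_prod1 k).
  by rewrite mem_primes fermat_prod1_gt0 dvd641_fermat_prod1.
have b0 : (0 < logn 641 (fermat_prod1 k))%N by rewrite logn_gt0.
move/negP: (beta_pp641_ndvd_pow2 _ N b0); apply.
by have := beta_pp_dvd_beta p641; rewrite beta_pow2.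
Qed.

Theorem mainTheorem2 (k : nat) (hk : (2 <= k)%N) :
  imperfect (m_k k) <-> k \in [:: 2; 3; 4; 5]%N.
Proof.
rewrite imperfect_m_kE; last exact: leq_trans hk.
have [k6 | k5] := leqP 6 k.
  have /negPf -> : k \notin [:: 2; 3; 4; 5]%N by rewrite !inE; lia.
  by split=> // /(beta_fermat_prod1_not_pow2 _ _ k6).
have -> : k \in [:: 2; 3; 4; 5]%N by rewrite !inE; lia.
split=> // _; apply: beta_fermat_prod1_prime => j /andP [_ jk].
by apply: fermat_prime_small; lia.
Qed.
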